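(* Let $\mathcal{A}$ be a CA of radius $r$ over alphabet $Q$. If $w$ is the foot of a wall of $\mathcal{A}$ having some brick of length at least $r$, then for every word $u\in Q^*$ there exists a wall of $\mathcal{A}$ whose foot is $wuw$ and which has bricks of length at least $|u|$.
   Context: A one-dimensional cellular automaton (CA) $\mathcal{A}$ is given by a finite alphabet $Q$, a radius $r\ge 0$ and a local rule $\delta:Q^{2r+1}\to Q$; it acts on configurations $c\in Q^{\mathbb{Z}}$ by $\mathcal{A}(c)_i=\delta(c_{i-r},\dots,c_{i+r})$. For $u\in Q^*$, $i\in\mathbb{Z}$, $[u]_i=\{c\in Q^{\mathbb{Z}}: c_i\cdots c_{i+|u|-1}=u\}$. Walls: for $u\in Q^*$ let $\langle u\rangle=[u]_{-|u|/2}$ if $|u|$ is even and $\langle u\rangle=[u]_{-(|u|+1)/2}$ if $|u|$ is odd. A wall for $\mathcal{A}$ is a sequence $(w_n)_{n\ge0}$ of nonempty words over $Q$ such that (1) for every $c\in\langle w_0\rangle$ and every $n\ge1$, $\mathcal{A}^n(c)\in\langle w_n\rangle$, and (2) the sequence $(|w_n|)_{n\ge0}$ is non-increasing. The word $w_0$ is the foot of the wall. A word $w$ is a brick of the wall $(w_n)$ if there are integers $p\ge1$, $n_0\ge0$ with $w_{pn+n_0}=w$ for all $n\ge0$. *)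

From mathcomp Require Import all_boot all_order all_algebra.
Set Implicit Arguments. Unset Strict Implicit. Unset Printing Implicit Defensive.
Import GRing.Theory Num.Theory.
Local Open Scope ring_scope.

Definition config (Q : finType) := int -> Q.

Definition ca_global (Q : finType) (r : nat)
  (delta : (2 * r + 1).-tuple Q -> Q) (c : config Q) : config Q :=
  fun i => delta [tuple c (i - r%:Z + k%:Z) | k < 2 * r + 1].

Definition cylinder (Q : finType) (u : seq Q) (i : int) : config Q -> Prop :=
  fun c => forall k : nat, (k < size u)%N -> c (i + k%:Z) = nth (c i) u k.

Definition wall_offset (Q : finType) (u : seq Q) : int :=
  if odd (size u) then - ((size u).+1./2)%:Z else - ((size u)./2)%:Z.

Definition centered (Q : finType) (u : seq Q) : config Q -> Prop :=
  cylinder u (wall_offset u).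

Definition is_wall (Q : finType) (r : nat) (delta : (2 * r + 1).-tuple Q -> Q)
  (w : nat -> seq Q) : Prop :=
  (forall n, w n <> [::]) /\
  (forall c : config Q, centered (w 0%N) c ->
     forall n : nat, (1 <= n)%N -> centered (w n) (iter n (ca_global delta) c)) /\
  (forall n : nat, (size (w n.+1) <= size (w n))%N).

Definition is_brick (Q : finType) (w : nat -> seq Q) (b : seq Q) : Prop :=
  exists p n0 : nat, (1 <= p)%N /\ forall n : nat, w (p * n + n0)%N = b.

From mathcomp Require Import all_boot all_order all_algebra.
From mathcomp Require Import zify.
Set Implicit Arguments. Unset Strict Implicit. Unset Printing Implicit Defensive.
Import GRing.Theory Num.Theory.
Local Open Scope ring_scope.

(* Two walls grow from the two copies of [w] in [w ++ u ++ w]. As [w] has a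
   brick of length at least [r], every [W n] is at least [r] wide, so the cells
   between the two walls never see the outside and evolve in the same way for
   every configuration centered on [w ++ u ++ w]. For the configuration of
   spatial period [w ++ u] the orbit stays spatially periodic, hence is
   eventually periodic in time by pigeonhole; the windows of length [|u| + 2]
   around the origin along this orbit form the required wall. *)

Section Configurations.
Variable Q : finType.
Implicit Types (c : config Q) (s : seq Q).

Lemma wall_offsetE s : wall_offset s = - (uphalf (size s))%:Z.
Proof.
rewrite /wall_offset; case: ifP => ho; first by rewrite uphalfE.
by rewrite uphalf_half ho.
Qed.

Lemma periodic_mulz c (P : int) : (forall i, c (i + P) = c i) ->
  forall (q : int) i, c (i + q * P) = c i.
Proof.
move=> cP.
have nat_mul (n : nat) i : c (i + n%:Z * P) = c i.
  elim: n i => [|n IH] i; first by rewrite mul0r addr0.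
  have -> : i + n.+1%:Z * P = (i + n%:Z * P) + P by lia.
  by rewrite cP IH.
case=> n i; first exact: nat_mul.
rewrite -[LHS](nat_mul n.+1); congr c; rewrite NegzE; lia.
Qed.

Lemma periodic_eq c c' (P : nat) : (0 < P)%N ->
  (forall i, c (i + P%:Z) = c i) -> (forall i, c' (i + P%:Z) = c' i) ->
  (forall j : 'I_P, c j = c' j) -> c =1 c'.
Proof.
move=> P_gt0 cP c'P ceq i.
have P_neq0 : P%:Z != 0 by lia.
have lt_mod : (absz (i %% P%:Z)%Z < P)%N.
  have := modz_ge0 i P_neq0; have : 0 < P%:Z by lia.
  by move/(ltz_pmod i); lia.
have -> : i = Posz (Ordinal lt_mod) + (i %/ P%:Z)%Z * P%:Z.
  by rewrite /= gez0_abs ?modz_ge0 // addrC -divz_eq.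
by rewrite (periodic_mulz cP) (periodic_mulz c'P) ceq.
Qed.

Definition periodic_config s (o : int) (x0 : Q) : config Q :=
  fun i => nth x0 s (absz ((i - o) %% (size s)%:Z)%Z).

Lemma periodic_configP s o x0 i :
  periodic_config s o x0 (i + (size s)%:Z) = periodic_config s o x0 i.
Proof. by rewrite /periodic_config addrAC modzDr. Qed.

Lemma cylinder_periodic_config s (n : nat) o x0 :
  cylinder (s ++ take n s) o (periodic_config s o x0).
Proof.
move=> j; rewrite size_cat size_take => lt_j.
rewrite /periodic_config addrAC subrr add0r modz_nat absz_nat.
rewrite (set_nth_default x0) ?size_cat ?size_take // nth_cat.
case: (ltnP j (size s)) => [lt_js | le_sj]; first by rewrite modn_small.
have -> : (j %% size s = j - size s)%N.
  by rewrite -{1}(subnK le_sj) modnDr modn_small //; move: lt_j; case: ifP; lia.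
rewrite nth_take //; move: lt_j; case: ifP; lia.
Qed.

Definition window c (K : nat) : seq Q := mkseq (fun j => c (- (uphalf K)%:Z + j%:Z)) K.

Lemma centered_window c c' (K : nat) :
  (forall j : nat, (j < K)%N -> c (- (uphalf K)%:Z + j%:Z) = c' (- (uphalf K)%:Z + j%:Z)) ->
  centered (window c' K) c.
Proof.
move=> ceq j; rewrite size_mkseq => lt_jK.
by rewrite wall_offsetE size_mkseq (set_nth_default (c' 0)) ?size_mkseq // nth_mkseq ?ceq.
Qed.

End Configurations.

Section GlobalMap.
Variables (Q : finType) (r : nat) (delta : (2 * r + 1)%N.-tuple Q -> Q).
Local Notation A := (ca_global delta).
Implicit Types c : config Q.

Lemma ca_global_ext c c' : c =1 c' -> A c =1 A c'.
Proof. by move=> ceq i; rewrite /ca_global; congr delta; apply: eq_mktuple => k; apply: ceq. Qed.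

Lemma iter_ca_global_ext n c c' : c =1 c' -> iter n A c =1 iter n A c'.
Proof. by elim: n => [|n IH] ceq //= i; apply: ca_global_ext; apply: IH. Qed.

Lemma ca_global_shift c (z : int) : A (fun i => c (i + z)) =1 fun i => A c (i + z).
Proof. by move=> i; rewrite /ca_global; congr delta; apply: eq_mktuple => k /=; congr c; lia. Qed.

Lemma iter_ca_global_shift n c (z : int) :
  iter n A (fun i => c (i + z)) =1 fun i => iter n A c (i + z).
Proof.
elim: n => [|n IH] //= i.
by rewrite (ca_global_ext IH); apply: ca_global_shift.
Qed.

Lemma iter_ca_global_periodic n c (z : int) : (forall i, c (i + z) = c i) ->
  forall i, iter n A c (i + z) = iter n A c i.
Proof.
move=> cz; elim: n => [|n IH] //= i.
by rewrite -ca_global_shift; apply: ca_global_ext.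
Qed.

Lemma ca_global_local c c' (i : int) :
  (forall t : int, i - r%:Z <= t -> t <= i + r%:Z -> c t = c' t) -> A c i = A c' i.
Proof.
move=> ceq; rewrite /ca_global; congr delta; apply: eq_mktuple => k /=.
have lt_k := ltn_ord k; by apply: ceq; lia.
Qed.

Lemma iter_ca_global_repeat c (P : nat) : (0 < P)%N -> (forall i, c (i + P%:Z) = c i) ->
  exists a b : nat, (a < b)%N /\ iter a A c =1 iter b A c.
Proof.
move=> P_gt0 cP.
pose T := {ffun 'I_P -> Q}.
pose f : 'I_#|T|.+1 -> T := fun n => [ffun j : 'I_P => iter n A c j].
have /injectivePn [x [y neq_xy fxy]] : ~~ injectiveb f.
  by apply/negP => /injectiveP/leq_card; rewrite card_ord ltnn.
have eq_xy : iter x A c =1 iter y A c.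
  apply: periodic_eq P_gt0 _ _ _ => [||j]; try exact: iter_ca_global_periodic.
  by have := congr1 (fun F : T => F j) fxy; rewrite !ffunE.
case: (ltngtP x y) => [lt_xy | lt_yx | /val_inj eq_xy']; first by exists x, y.
- by exists y, x; split=> // i; rewrite eq_xy.
- by case/eqP: neq_xy.
Qed.

Lemma iter_eventually_periodic c (a p : nat) : iter a A c =1 iter (p + a) A c ->
  forall t N, (a <= N)%N -> iter (p * t + N) A c =1 iter N A c.
Proof.
move=> eq_ap.
have step N : (a <= N)%N -> iter (p + N) A c =1 iter N A c.
  move=> le_aN; have -> : (p + N = N - a + (p + a))%N by lia.
  rewrite -{2}(subnK le_aN) !iterD.
  by apply: iter_ca_global_ext => i; rewrite -iterD -eq_ap.
elim=> [|t IH] N le_aN i; first by rewrite muln0.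
rewrite mulnS -addnA step ?IH //; lia.
Qed.

End GlobalMap.

Section Walls.
Variables (Q : finType) (r : nat) (delta : (2 * r + 1)%N.-tuple Q -> Q).
Local Notation A := (ca_global delta).
Implicit Types (W : nat -> seq Q) (c : config Q).

Lemma wall_size_mono W : is_wall delta W ->
  forall n m, (n <= m)%N -> (size (W m) <= size (W n))%N.
Proof.
move=> [_ [_ W_le]] n m /subnK <-; elim: (m - n)%N => [|d IH] //.
by rewrite addSn; apply: leq_trans (W_le _) IH.
Qed.

Lemma wall_brick_size W b : is_wall delta W -> is_brick W b ->
  forall n, (size b <= size (W n))%N.
Proof.
move=> W_wall [p [n0 [p_gt0 W_b]]] n.
by rewrite -(W_b n); apply: wall_size_mono => //; nia.
Qed.

Lemma wall_translate W c (z : int) n j : is_wall delta W ->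
  centered (W 0%N) (fun i => c (i + z)) -> (1 <= n)%N -> (j < size (W n))%N ->
  iter n A c (wall_offset (W n) + j%:Z + z) = nth (c 0) (W n) j.
Proof.
move=> [_ [W_cent _]] cz n_ge1 lt_j.
rewrite -(iter_ca_global_shift _ n c z) (W_cent _ cz n n_ge1 j lt_j).
exact: set_nth_default.
Qed.

Section Core.
Variables (W : nat -> seq Q) (u : seq Q).
Hypothesis W_wall : is_wall delta W.
Hypothesis r_le_W : forall n, (r <= size (W n))%N.
Local Notation w := (W 0%N).
Local Notation m := (size (W 0%N)).
Local Notation k := (size u).
Local Notation o := (wall_offset (W 0%N ++ u ++ W 0%N)).
(* Translating by [sL] (resp. [sR]) brings the left (resp. right) copy of [w]
   in [w ++ u ++ w] to the position where [w] is centered. *)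
Local Notation sL := (o + (uphalf m)%:Z).
Local Notation sR := (o + (uphalf m)%:Z + (m + k)%:Z).

Lemma centered_cat_left c : centered (w ++ u ++ w) c -> centered w (fun i => c (i + sL)).
Proof.
move=> c_cent j lt_j /=.
have -> : wall_offset w + j%:Z + sL = o + j%:Z by rewrite wall_offsetE; lia.
rewrite c_cent; last by rewrite !size_cat; lia.
by rewrite nth_cat lt_j; apply: set_nth_default.
Qed.

Lemma centered_cat_right c : centered (w ++ u ++ w) c -> centered w (fun i => c (i + sR)).
Proof.
move=> c_cent j lt_j /=.
have -> : wall_offset w + j%:Z + sR = o + (m + (k + j))%:Z by rewrite wall_offsetE; lia.
rewrite c_cent; last by rewrite !size_cat; lia.
rewrite nth_cat ltnNge leq_addr /= addKn nth_cat ltnNge leq_addr /= addKn.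
exact: set_nth_default.
Qed.

Lemma core_determined c c' : centered (w ++ u ++ w) c -> centered (w ++ u ++ w) c' ->
  forall n (i : int), sL + wall_offset (W n) <= i ->
  i < sR + wall_offset (W n) + (size (W n))%:Z ->
  iter n A c i = iter n A c' i.
Proof.
move=> c_cent c'_cent; elim => [|n IH] i; rewrite !(wall_offsetE (W _)) => ge_i lt_i.
  have [j def_i] : exists j : nat, i = o + j%:Z by exists (absz (i - o)%R); lia.
  have lt_j : (j < size (w ++ u ++ w))%N by rewrite !size_cat; lia.
  by rewrite def_i /= c_cent // c'_cent //; apply: set_nth_default.
have le_n1n := wall_size_mono W_wall (leqnSn n).
have le_uphalf := uphalf_leq le_n1n; have le_half := half_leq le_n1n.
have r_le := r_le_W n.+1; move: IH; rewrite (wall_offsetE (W n)) => IH.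
have [i_left | i_notleft] :=
  boolP (i < sL - (uphalf (size (W n.+1)))%:Z + (size (W n.+1))%:Z).
  have [j [-> lt_j]] : exists j : nat,
      i = wall_offset (W n.+1) + j%:Z + sL /\ (j < size (W n.+1))%N.
    by exists (absz (i - sL - wall_offset (W n.+1))%R); rewrite wall_offsetE; lia.
  rewrite (wall_translate W_wall (centered_cat_left c_cent)) //
    (wall_translate W_wall (centered_cat_left c'_cent)) //.
  exact: set_nth_default.
have [i_right | i_notright] := boolP (sR - (uphalf (size (W n.+1)))%:Z <= i).
  have [j [-> lt_j]] : exists j : nat,
      i = wall_offset (W n.+1) + j%:Z + sR /\ (j < size (W n.+1))%N.
    by exists (absz (i - sR - wall_offset (W n.+1))%R); rewrite wall_offsetE; lia.
  rewrite (wall_translate W_wall (centered_cat_right c_cent)) //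
    (wall_translate W_wall (centered_cat_right c'_cent)) //.
  exact: set_nth_default.
by apply: ca_global_local => t ? ?; apply: IH; lia.
Qed.

Definition core_wall c0 n : seq Q :=
  if n is 0 then w ++ u ++ w else window (iter n A c0) k.+2.

Lemma core_wallE c0 n : (0 < n)%N -> core_wall c0 n = window (iter n A c0) k.+2.
Proof. by case: n. Qed.

Lemma core_wall_is_wall c0 : centered (w ++ u ++ w) c0 -> is_wall delta (core_wall c0).
Proof.
have w_gt0 : (0 < m)%N by case: W_wall => W_ne _; move: (W_ne 0%N); case: w.
move=> c0_cent; split; [|split].
- by case=> [|n] /=; [case: w w_gt0 | rewrite /window /mkseq].
- move=> c c_cent [|n] // _; apply: centered_window => j lt_j.
  have le_m := wall_size_mono W_wall (leq0n n.+1).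
  have W_gt0 : (0 < size (W n.+1))%N by have := W_wall.1 n.+1; case: (W n.+1).
  by apply: (core_determined c_cent c0_cent); rewrite !wall_offsetE !size_cat; lia.
- by case=> [|n]; rewrite /core_wall /window !size_mkseq ?size_cat; lia.
Qed.

End Core.
End Walls.

Theorem mainTheorem3 (Q : finType) (r : nat) (delta : (2 * r + 1).-tuple Q -> Q)
  (w : seq Q) :
  (exists W : nat -> seq Q, is_wall delta W /\ W 0%N = w /\
     exists b : seq Q, is_brick W b /\ (r <= size b)%N) ->
  forall u : seq Q,
    exists W' : nat -> seq Q, is_wall delta W' /\ W' 0%N = w ++ u ++ w /\
      exists b : seq Q, is_brick W' b /\ (size u <= size b)%N.
Proof.
move=> [W [W_wall [<- [b [W_b r_le_b]]]]] u.
have r_le_W n : (r <= size (W n))%N := leq_trans r_le_b (wall_brick_size W_wall W_b n).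
have [x0 w_x0] : exists x0, W 0%N = x0 :: behead (W 0%N).
  by have := W_wall.1 0%N; case: (W 0%N) => // x0 s _; exists x0.
pose s := W 0%N ++ u; pose o := wall_offset (W 0%N ++ u ++ W 0%N).
have s_gt0 : (0 < size s)%N by rewrite size_cat w_x0.
have c0_cent : centered (W 0%N ++ u ++ W 0%N) (periodic_config s o x0).
  have wuw_s : W 0%N ++ u ++ W 0%N = s ++ take (size (W 0%N)) s.
    by rewrite take_size_cat ?catA.
  by rewrite /centered {1}wuw_s; apply: cylinder_periodic_config.
have [a [a' [lt_aa' eq_aa']]] := iter_ca_global_repeat delta s_gt0 (periodic_configP s o x0).
exists (core_wall delta W u (periodic_config s o x0)).
split; [exact: core_wall_is_wall | split=> //].
exists (core_wall delta W u (periodic_config s o x0) a.+1).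
split; last by rewrite core_wallE // size_mkseq leqW.
exists (a' - a)%N, a.+1; split=> [|t]; first by rewrite subn_gt0.
rewrite !core_wallE ?addn_gt0 ?orbT //; apply: eq_mkseq => j.
by apply: (iter_eventually_periodic (a := a)); rewrite ?subnK 1?ltnW.
Qed.
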